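(* Consider the augmented Lagrange algorithm described in the context, and assume that in step (1) the pair $(\bar y_k,\bar u_k)$ is always chosen to be a global minimizer of the augmented Lagrange sub-problem with parameters $\mu_k,\rho_k$ (together with its adjoint state). Assume that only finitely many steps of the algorithm are successful. Then $\frac1{\rho_k}\|(\mu_k+\rho_k(\bar y_k-\psi))_+\|^2_{L^2(\Omega)}$ is uniformly bounded in $k$.
   Context: Setting. Let $\Omega\subset\mathbb{R}^N$, $N\in\{2,3\}$, be a bounded domain with $C^{1,1}$ boundary $\Gamma$, or a bounded convex domain with polygonal boundary $\Gamma$. Let $y_d\in L^2(\Omega)$, $\psi\in C(\bar\Omega)$, $\alpha>0$, $u_a,u_b\in L^\infty(\Omega)$ with $u_a\le u_b$, $U_{ad}=\{u\in L^\infty(\Omega): u_a\le u\le u_b\text{ a.e.}\}$. Let $Ay=-\sum_{i,j=1}^N\partial_{x_j}(a_{ij}\partial_{x_i}y)+a_0y$ with $a_{ij}\in C^{0,1}(\bar\Omega)$, $a_0\in L^\infty(\Omega)$, $a_0\ge0$ a.e., $a_0\not\equiv0$, uniformly elliptic with constant $\delta>0$; $\partial_{\nu_A}y=\sum a_{ij}\partial_{x_i}y\,\nu_j$; $A^*$ the formal adjoint with conormal derivative $\partial_{\nu_{A^*}}$. The function $d:\Omega\times\mathbb{R}\to\mathbb{R}$ is measurable in $x$, $C^2$ in $y$ for a.e. $x$, $\|d(\cdot,0)\|_\infty+\|d_y(\cdot,0)\|_\infty+\|d_{yy}(\cdot,0)\|_\infty<\infty$, $d_y\ge0$, $d_{yy}$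 Lipschitz in $y$ on bounded sets uniformly in $x$, and $d_y>0$ on $E_\Omega\times\mathbb{R}$ for some $E_\Omega$ of positive measure. $S(u)\in H^1(\Omega)\cap C(\bar\Omega)$ is the weak solution of $Ay+d(x,y)=u$ in $\Omega$, $\partial_{\nu_A}y=0$ on $\Gamma$. $f(u)=\frac12\|S(u)-y_d\|_{L^2}^2+\frac\alpha2\|u\|_{L^2}^2$. Problem (P): minimize $f(u)$ over $u\in U_{ad}$ with $S(u)\le\psi$ on $\bar\Omega$. $(\cdot)_+=\max(0,\cdot)$ pointwise; $(a,b)_+:=\int_\Omega\max(0,a(x)b(x))dx$. Augmented Lagrange sub-problem ($\rho>0$, $0\le\mu\in L^2$): minimize $f_{AL}(u)=f(u)+\frac1{2\rho}\int_\Omega((\mu+\rho(S(u)-\psi))_+)^2dx$ over $u\in U_{ad}$. Its optimality system: $(\bar y,\bar u,\bar p)$ with $\bar u\in U_{ad}$, $\bar y=S(\bar u)$, $\bar p\in H^1(\Omega)$ weak solution of $A^*\bar p+d_y(x,\bar y)\bar p=\bar y-y_d+(\mu+\rho(\bar y-\psi))_+$, $\partial_{\nu_{A^*}}\bar p=0$, and $(\bar p+\alpha\bar u,u-\bar u)\ge0$ for all $u\in U_{ad}$ (every global minimizer with its adjoint satisfies it). Algorithm: choose $\rho_1>0$, $0\le\mu_1\in L^2(\Omega)$, $\theta>1$, $\tau\in(0,1)$, $R_0^+>0$; $k=n=1$. Iteration $k$: (1) choose a solution $(\bar y_k,\bar u_k,\bar p_k)$ of the optimality system with $\mu=\mu_k,\rho=\rho_k$;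 (2) $\bar\mu_k:=(\mu_k+\rho_k(\bar y_k-\psi))_+$; (3) $R_k:=\|(\bar y_k-\psi)_+\|_{C(\bar\Omega)}+(\bar\mu_k,\psi-\bar y_k)_+$; (4) if $R_k\le\tau R^+_{n-1}$ the step is successful: $\mu_{k+1}:=\bar\mu_k$, $\rho_{k+1}:=\rho_k$, $R_n^+:=R_k$, $n:=n+1$; (5) otherwise $\mu_{k+1}:=\mu_k$, $\rho_{k+1}:=\theta\rho_k$; then $k:=k+1$ and repeat indefinitely. *)

From mathcomp Require Import all_boot all_order all_algebra.
From mathcomp Require Import all_classical all_reals all_analysis.
Set Implicit Arguments.
Unset Strict Implicit.
Unset Printing Implicit Defensive.
Import Order.TTheory GRing.Theory Num.Theory.
Local Open Scope classical_set_scope.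
Local Open Scope ring_scope.

Section AL.
Context {R : realType} {d : measure_display} {T : measurableType d}.
Variable (mu : {measure set T -> \bar R}) (Om : set T).

Definition pos (a : R) : R := Num.max 0 a.

Definition sqL2 (v : T -> R) : \bar R :=
  (\int[mu]_(x in Om) ((v x) ^+ 2)%:E)%E.

Definition pos_pair (a b : T -> R) : \bar R :=
  (\int[mu]_(x in Om) (pos (a x * b x))%:E)%E.

Definition sup_pos_part (y psi : T -> R) : \bar R :=
  ereal_sup [set (pos (y x - psi x))%:E | x in Om].

Definition Uad (ua ub : T -> R) (u : T -> R) : Prop :=
  measurable_fun Om u /\
  (exists M : R, {ae mu, forall x, Om x -> `|u x| <= M}) /\
  {ae mu, forall x, Om x -> ua x <= u x <= ub x}.

Definition fobj (S : (T -> R) -> (T -> R)) (yd : T -> R) (alpha : R)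
  (u : T -> R) : \bar R :=
  ((2^-1)%:E * sqL2 (fun x => (S u x - yd x)%R) + (alpha / 2)%:E * sqL2 u)%E.

Definition mubar (m : T -> R) (rho : R) (y psi : T -> R) : T -> R :=
  fun x => pos (m x + rho * (y x - psi x)).

Definition fAL (S : (T -> R) -> (T -> R)) (yd psi : T -> R) (alpha : R)
  (m : T -> R) (rho : R) (u : T -> R) : \bar R :=
  (fobj S yd alpha u + ((2 * rho)^-1)%:E * sqL2 (mubar m rho (S u) psi))%E.

Definition Rres (y psi mb : T -> R) : \bar R :=
  (sup_pos_part y psi + pos_pair mb (fun x => (psi x - y x)%R))%E.

End AL.

(** Fix a feasible control [v] of (P).  Comparing the global minimizer [u_k]
    of the augmented Lagrangian with [v], and using that
    [(mu_k + rho_k (S v - psi))_+ <= mu_k] because [S v <= psi], gives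
    [rho_k^-1 ||mubar_k||^2 <= 2 f(v) + rho_k^-1 ||mu_k||^2].  Hence
    [Y_k := rho_k^-1 ||mu_k||^2] grows by at most [2 f(v)] per step; from the
    last successful step [K] on, [mu_k] is frozen while [rho_k] increases, so
    [Y_k] no longer grows and stays below [Y_0 + 2 K f(v)]. *)
From mathcomp Require Import all_boot all_order all_algebra.
From mathcomp Require Import all_classical all_reals all_analysis.
From mathcomp Require Import measurable_realfun lra.
Import Order.TTheory GRing.Theory Num.Theory.
Local Open Scope classical_set_scope.
Local Open Scope ring_scope.

Lemma eventually_nonincreasing_bounded (R : realDomainType)
    (Y : nat -> \bar R) (c : R) (K : nat) :
  0 <= c -> (forall k, (Y k.+1 <= c%:E + Y k)%E) ->
  (forall k, (K <= k)%N -> (Y k.+1 <= Y k)%E) ->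
  forall k, (Y k <= Y 0%N + (K%:R * c)%:E)%E.
Proof.
move=> c0 Yinc Ydec.
have Ymin k : (Y k <= Y 0%N + ((minn k K)%:R * c)%:E)%E.
  elim: k => [|k IHk]; first by rewrite min0n mul0r addr0.
  have [kK|Kk] := ltnP k K.
    rewrite (minn_idPl kK); rewrite (minn_idPl (ltnW kK)) in IHk.
    apply: le_trans (Yinc k) _; apply: le_trans (leeD2l _ IHk) _.
    by rewrite addeCA -EFinD -natr1 mulrDl mul1r (addrC c).
  apply: le_trans (Ydec _ Kk) _; apply: le_trans IHk _.
  by rewrite !(minn_idPr _) ?(leq_trans Kk).
move=> k; apply: le_trans (Ymin k) _; rewrite leeD2l // lee_fin.
by rewrite ler_wpM2r // ler_nat geq_minr.
Qed.

Section SquaredL2Norm.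
Context {R : realType} {d : measure_display} {T : measurableType d}.
Context (mu : {measure set T -> \bar R}) {D : set T}.
Hypothesis mD : measurable D.

Lemma sqL2_ge0 (f : T -> R) : (0 <= sqL2 mu D f)%E.
Proof. by apply: integral_ge0 => x _; rewrite lee_fin sqr_ge0. Qed.

Lemma measurable_EFin_sqr (f : T -> R) :
  measurable_fun D f -> measurable_fun D (fun x => (f x ^+ 2)%:E).
Proof. by move=> mf; apply/measurable_EFinP; exact: measurable_funX. Qed.

Lemma le_sqL2 (f g : T -> R) :
  measurable_fun D f -> measurable_fun D g ->
  (forall x, D x -> `|f x| <= `|g x|) -> (sqL2 mu D f <= sqL2 mu D g)%E.
Proof.
move=> mf mg fg; apply: ge0_le_integral => //.
- by move=> x _; rewrite lee_fin sqr_ge0.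
- exact: measurable_EFin_sqr.
- exact: measurable_EFin_sqr.
move=> x Dx; rewrite lee_fin -(real_normK (num_real (f x))).
by rewrite -(real_normK (num_real (g x))) ler_sqr ?nnegrE ?fg.
Qed.

Lemma sqL2_sub_le (f g : T -> R) :
  measurable_fun D f -> measurable_fun D g ->
  (sqL2 mu D (fun x => (f x - g x)%R)
    <= 2%:E * sqL2 mu D f + 2%:E * sqL2 mu D g)%E.
Proof.
move=> mf mg.
have sqr_ge0E (h : T -> R) x : D x -> (0 <= (h x ^+ 2)%:E :> \bar R)%E.
  by rewrite lee_fin sqr_ge0.
have measurable_scaled_sqr (c : R) (h : T -> R) :
    measurable_fun D h -> measurable_fun D (fun x => c%:E * (h x ^+ 2)%:E)%E.
  by move=> mh; apply: emeasurable_funM => //; exact: measurable_EFin_sqr.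
apply: (@le_trans _ _
  (\int[mu]_(x in D) (2%:E * (f x ^+ 2)%:E + 2%:E * (g x ^+ 2)%:E))%E).
  apply: ge0_le_integral => //.
  - by move=> x _; rewrite lee_fin sqr_ge0.
  - by apply/measurable_EFinP; apply: measurable_funX; exact: measurable_funB.
  - by apply: emeasurable_funD; exact: measurable_scaled_sqr.
  move=> x _; rewrite -!EFinM -EFinD lee_fin.
  have := sqr_ge0 (f x + g x); rewrite sqrrB sqrrD; lra.
rewrite ge0_integralD //;
  try by [move=> x _; apply: mule_ge0; rewrite ?lee_fin ?sqr_ge0
         | exact: measurable_scaled_sqr].
by rewrite !ge0_integralZl_EFin //;
  do ?[exact: sqr_ge0E | exact: measurable_EFin_sqr].
Qed.

Lemma sqL2_le_ae_bound (f : T -> R) (M : R) :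
  measurable_fun D f -> {ae mu, forall x, D x -> `|f x| <= M} ->
  (sqL2 mu D f <= (M ^+ 2)%:E * mu D)%E.
Proof.
move=> mf fM; rewrite -integral_cst //.
apply: ae_ge0_le_integral => //.
- by move=> x _; rewrite lee_fin sqr_ge0.
- exact: measurable_EFin_sqr.
- by move=> x _; rewrite lee_fin sqr_ge0.
apply: filterS fM => x fxM Dx; rewrite lee_fin /=.
by move: (fxM Dx); rewrite ler_norml => /andP[? ?]; nra.
Qed.

End SquaredL2Norm.

Section AugmentedLagrangian.
Context {R : realType} {d : measure_display} {T : measurableType d}.
Context {mu : {measure set T -> \bar R}} {Om : set T}.
Context {S : (T -> R) -> T -> R} {yd psi : T -> R} {alpha : R}.
Hypothesis mOm : measurable Om.
Hypothesis alpha_ge0 : 0 <= alpha.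

Lemma fobj_ge0 (u : T -> R) : (0 <= fobj mu Om S yd alpha u)%E.
Proof.
by apply: adde_ge0; apply: mule_ge0; rewrite ?sqL2_ge0 ?lee_fin ?divr_ge0.
Qed.

Lemma fobj_lt_pinfty (ua ub u : T -> R) :
  (mu Om < +oo)%E -> measurable_fun Om yd -> (sqL2 mu Om yd < +oo)%E ->
  Uad mu Om ua ub u -> measurable_fun Om (S u) -> (sqL2 mu Om (S u) < +oo)%E ->
  (fobj mu Om S yd alpha u < +oo)%E.
Proof.
move=> Omfin myd yd_fin [mu_ [[M uM] _]] mSu Su_fin.
apply: lte_add_pinfty; apply: lte_mul_pinfty; rewrite ?lee_fin ?divr_ge0 //.
  apply: le_lt_trans (sqL2_sub_le mu mOm _ _ mSu myd) _.
  by apply: lte_add_pinfty; apply: lte_mul_pinfty.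
apply: le_lt_trans (sqL2_le_ae_bound mu mOm _ _ mu_ uM) _ => //.
by apply: lte_mul_pinfty; rewrite ?lee_fin ?sqr_ge0.
Qed.

Lemma measurable_mubar (m y : T -> R) (rho : R) :
  measurable_fun Om m -> measurable_fun Om y -> measurable_fun Om psi ->
  measurable_fun Om (mubar m rho y psi).
Proof.
move=> mm my mpsi.
have -> : mubar m rho y psi = cst 0 \max (m \+ cst rho \* (y \- psi)) by [].
apply: measurable_maxr; first exact: measurable_cst.
apply: measurable_funD => //.
by apply: measurable_funM; [exact: measurable_cst | exact: measurable_funB].
Qed.

Lemma mubar_ge0 (m y : T -> R) (rho : R) x : 0 <= mubar m rho y psi x.
Proof. by rewrite /mubar /pos le_max lexx. Qed.

Lemma mubar_le (m y : T -> R) (rho : R) x :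
  0 <= m x -> 0 <= rho -> y x <= psi x -> mubar m rho y psi x <= m x.
Proof.
move=> m0 rho0 ypsi; rewrite /mubar /pos ge_max m0 gerDl.
by rewrite mulr_ge0_le0 // subr_le0.
Qed.

Lemma fAL_minimizer_mubar_le (m u v : T -> R) (rho : R) :
  0 < rho -> measurable_fun Om m -> (forall x, Om x -> 0 <= m x) ->
  measurable_fun Om psi -> measurable_fun Om (S v) ->
  (forall x, Om x -> S v x <= psi x) ->
  (fAL mu Om S yd psi alpha m rho u <= fAL mu Om S yd psi alpha m rho v)%E ->
  ((rho^-1)%:E * sqL2 mu Om (mubar m rho (S u) psi)
    <= 2%:E * fobj mu Om S yd alpha v + (rho^-1)%:E * sqL2 mu Om m)%E.
Proof.
move=> rho_gt0 mm m_ge0 mpsi mSv v_feas uv.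
have c_ge0 : (0 <= ((2 * rho)^-1)%:E :> \bar R)%E.
  by rewrite lee_fin invr_ge0 mulr_ge0 // ltW.
have mubar_v_le : (sqL2 mu Om (mubar m rho (S v) psi) <= sqL2 mu Om m)%E.
  apply: le_sqL2 => //; first exact: measurable_mubar.
  move=> x Omx; rewrite !ger0_norm ?mubar_ge0 ?m_ge0 //.
  by rewrite mubar_le ?m_ge0 ?v_feas ?ltW.
have half : (((2 * rho)^-1)%:E * sqL2 mu Om (mubar m rho (S u) psi)
    <= fobj mu Om S yd alpha v + ((2 * rho)^-1)%:E * sqL2 mu Om m)%E.
  apply: le_trans (lee_paddl (fobj_ge0 u) (lexx _)) _.
  apply: le_trans uv _; rewrite leeD2l //.
  exact: lee_wpmul2l.
have -> : rho^-1 = 2 * (2 * rho)^-1 by rewrite invfM mulrA divff ?mul1r.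
rewrite !EFinM -!muleA -ge0_muleDr ?fobj_ge0 ?mule_ge0 ?sqL2_ge0 //.
exact: lee_wpmul2l.
Qed.

End AugmentedLagrangian.

Section AugmentedLagrangeMethod.
Context {R : realType} {d : measure_display} {T : measurableType d}.
Context {mu : {measure set T -> \bar R}} {Om : set T}.
Context {S : (T -> R) -> T -> R} {yd psi ua ub : T -> R} {alpha theta tau : R}.
Context {muk : nat -> T -> R} {rhok : nat -> R} {yk uk : nat -> T -> R}.
Context {Rlast : nat -> \bar R}.

Local Notation mubar_k k := (mubar (muk k) (rhok k) (yk k) psi).
Local Notation successful k :=
  (Rres mu Om (yk k) psi (mubar_k k) <= tau%:E * Rlast k)%E
  (k in scope nat_scope).

Hypothesis algorithm_step : forall k,
  let mb := mubar (muk k) (rhok k) (yk k) psi in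
  let Rk := Rres mu Om (yk k) psi mb in
  if asbool (Rk <= tau%:E * Rlast k)%E then
    muk k.+1 = mb /\ rhok k.+1 = rhok k /\ Rlast k.+1 = Rk
  else
    muk k.+1 = muk k /\ rhok k.+1 = theta * rhok k /\ Rlast k.+1 = Rlast k.

Lemma step_cases k :
  (muk k.+1 = mubar_k k /\ rhok k.+1 = rhok k) \/
  (muk k.+1 = muk k /\ rhok k.+1 = theta * rhok k).
Proof.
by have /= := algorithm_step k; case: asboolP => _ [-> [-> _]]; [left|right].
Qed.

Lemma unsuccessful_step k :
  ~ successful k -> muk k.+1 = muk k /\ rhok k.+1 = theta * rhok k.
Proof.
by move=> fail; have /= := algorithm_step k; rewrite asboolF // => -[-> [-> _]].
Qed.

Hypothesis theta_ge1 : 1 <= theta.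
Hypothesis rhok0_gt0 : 0 < rhok 0%N.

Lemma rhok_gt0 k : 0 < rhok k.
Proof.
elim: k => [//|k IHk].
by case: (step_cases k) => -[_ ->] //; rewrite mulr_gt0 // (lt_le_trans ltr01).
Qed.

Hypothesis muk0_ge0 : forall x, Om x -> 0 <= muk 0%N x.

Lemma muk_ge0 k x : Om x -> 0 <= muk k x.
Proof.
move=> Omx; elim: k => [|k IHk]; first exact: muk0_ge0.
by case: (step_cases k) => -[-> _] //; exact: mubar_ge0.
Qed.

Hypothesis mOm : measurable Om.
Hypothesis mpsi : measurable_fun Om psi.
Hypothesis mmuk0 : measurable_fun Om (muk 0%N).
Hypothesis measurable_state :
  forall u, Uad mu Om ua ub u -> measurable_fun Om (S u).
Hypothesis minimizer : forall k,
  Uad mu Om ua ub (uk k) /\ yk k = S (uk k) /\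
  forall v, Uad mu Om ua ub v ->
    (fAL mu Om S yd psi alpha (muk k) (rhok k) (uk k)
     <= fAL mu Om S yd psi alpha (muk k) (rhok k) v)%E.

Lemma measurable_yk k : measurable_fun Om (yk k).
Proof. by have [uk_ad [-> _]] := minimizer k; exact: measurable_state. Qed.

Lemma measurable_muk k : measurable_fun Om (muk k).
Proof.
elim: k => [//|k IHk].
case: (step_cases k) => -[-> _] //.
by apply: measurable_mubar => //; exact: measurable_yk.
Qed.

Hypothesis alpha_ge0 : 0 <= alpha.
Variable v : T -> R.
Hypothesis v_admissible : Uad mu Om ua ub v.
Hypothesis v_feasible : forall x, Om x -> S v x <= psi x.

Definition scaled_sqL2_muk k := (((rhok k)^-1)%:E * sqL2 mu Om (muk k))%E.

Lemma scaled_sqL2_mubar_le k :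
  (((rhok k)^-1)%:E * sqL2 mu Om (mubar_k k)
    <= 2%:E * fobj mu Om S yd alpha v + scaled_sqL2_muk k)%E.
Proof.
have [_ [-> uk_min]] := minimizer k.
apply: fAL_minimizer_mubar_le; rewrite ?rhok_gt0 ?uk_min //.
- exact: measurable_muk.
- exact: muk_ge0.
- exact: measurable_state.
Qed.

Lemma scaled_sqL2_muk_unsuccessful k :
  ~ successful k -> (scaled_sqL2_muk k.+1 <= scaled_sqL2_muk k)%E.
Proof.
rewrite /scaled_sqL2_muk => /unsuccessful_step[-> ->].
apply: lee_wpmul2r; first exact: sqL2_ge0.
rewrite lee_fin invfM; apply: ler_piMl; first by rewrite invr_ge0 ltW ?rhok_gt0.
by rewrite invf_le1 // (lt_le_trans ltr01).
Qed.

Lemma scaled_sqL2_muk_succ_le k :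
  (scaled_sqL2_muk k.+1
    <= 2%:E * fobj mu Om S yd alpha v + scaled_sqL2_muk k)%E.
Proof.
rewrite /scaled_sqL2_muk; have /= := algorithm_step k.
case: asboolP => [_ [-> [-> _]]|fail _].
  exact: scaled_sqL2_mubar_le.
apply: lee_paddl; first by rewrite mule_ge0 ?fobj_ge0.
exact: scaled_sqL2_muk_unsuccessful.
Qed.

Theorem scaled_sqL2_mubar_bounded :
  (fobj mu Om S yd alpha v < +oo)%E -> (sqL2 mu Om (muk 0%N) < +oo)%E ->
  (exists K, forall k, (K <= k)%N -> ~ successful k) ->
  exists C : R, forall k, (((rhok k)^-1)%:E * sqL2 mu Om (mubar_k k) <= C%:E)%E.
Proof.
move=> fobj_fin muk0_fin [K eventually_unsuccessful].
have fobj_fin_num : fobj mu Om S yd alpha v \is a fin_num.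
  by rewrite ge0_fin_numE ?fobj_ge0.
have Y0_fin_num : scaled_sqL2_muk 0 \is a fin_num.
  by rewrite fin_numM // ge0_fin_numE ?sqL2_ge0.
pose c := 2 * fine (fobj mu Om S yd alpha v).
have c_ge0 : 0 <= c by rewrite mulr_ge0 ?fine_ge0 ?fobj_ge0.
have c_E : (2%:E * fobj mu Om S yd alpha v)%E = c%:E by rewrite EFinM fineK.
have Y_bound : forall k,
    (scaled_sqL2_muk k <= scaled_sqL2_muk 0 + (K%:R * c)%:E)%E.
  apply: eventually_nonincreasing_bounded => // k.
    by rewrite -c_E; exact: scaled_sqL2_muk_succ_le.
  by move=> /eventually_unsuccessful; exact: scaled_sqL2_muk_unsuccessful.
exists (c + (fine (scaled_sqL2_muk 0) + K%:R * c)) => k.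
apply: le_trans (scaled_sqL2_mubar_le k) _.
by rewrite c_E EFinD leeD2l // EFinD fineK // Y_bound.
Qed.

End AugmentedLagrangeMethod.

Theorem lemma4p5
  (R : realType) (d : measure_display) (T : measurableType d)
  (mu : {measure set T -> \bar R}) (Om : set T)
  (S : (T -> R) -> (T -> R)) (yd psi ua ub : T -> R) (alpha : R)
  (rho1 theta tau R0 : R) (mu1 : T -> R)
  (muk : nat -> T -> R) (rhok : nat -> R) (yk uk : nat -> T -> R)
  (Rlast : nat -> \bar R) :
  (* standing assumptions *)
  measurable Om -> (0 < mu Om)%E -> (mu Om < +oo)%E ->
  measurable_fun Om yd -> (sqL2 mu Om yd < +oo)%E ->
  measurable_fun Om psi -> (exists M : R, forall x, Om x -> `|psi x| <= M) ->
  0 < alpha ->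
  measurable_fun Om ua -> measurable_fun Om ub ->
  (exists M : R, {ae mu, forall x, Om x -> `|ua x| <= M /\ `|ub x| <= M}) ->
  {ae mu, forall x, Om x -> ua x <= ub x} ->
  (* the control-to-state map yields square integrable states *)
  (forall u, Uad mu Om ua ub u ->
     measurable_fun Om (S u) /\ (sqL2 mu Om (S u) < +oo)%E) ->
  (* problem (P) has a feasible point *)
  (exists u, Uad mu Om ua ub u /\ forall x, Om x -> S u x <= psi x) ->
  (* algorithm parameters *)
  0 < rho1 -> (forall x, Om x -> 0 <= mu1 x) ->
  measurable_fun Om mu1 -> (sqL2 mu Om mu1 < +oo)%E ->
  1 < theta -> 0 < tau < 1 -> 0 < R0 ->
  (* initialisation (iteration k = 0 is the paper's first iteration) *)
  muk 0%N = mu1 -> rhok 0%N = rho1 -> Rlast 0%N = R0%:E ->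
  (* step (1): (yk, uk) is a global minimizer of the AL sub-problem *)
  (forall k, Uad mu Om ua ub (uk k) /\ yk k = S (uk k) /\
     forall v, Uad mu Om ua ub v ->
       (fAL mu Om S yd psi alpha (muk k) (rhok k) (uk k)
        <= fAL mu Om S yd psi alpha (muk k) (rhok k) v)%E) ->
  (* steps (2)-(5) *)
  (forall k,
     let mb := mubar (muk k) (rhok k) (yk k) psi in
     let Rk := Rres mu Om (yk k) psi mb in
     if asbool (Rk <= tau%:E * Rlast k)%E then
       muk k.+1 = mb /\ rhok k.+1 = rhok k /\ Rlast k.+1 = Rk
     else
       muk k.+1 = muk k /\ rhok k.+1 = theta * rhok k /\ Rlast k.+1 = Rlast k) ->
  (* only finitely many successful steps *)
  (exists K : nat, forall k, (K <= k)%N ->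
     ~ (Rres mu Om (yk k) psi (mubar (muk k) (rhok k) (yk k) psi)
          <= tau%:E * Rlast k)%E) ->
  exists C : R, forall k,
    (((rhok k)^-1)%:E * sqL2 mu Om (mubar (muk k) (rhok k) (yk k) psi)
      <= C%:E)%E.
Proof.
move=> mOm _ Om_fin myd yd_fin mpsi _ alpha_gt0 _ _ _ _ state [v [v_ad v_feas]].
move=> rho1_gt0 mu1_ge0 mmu1 mu1_fin theta_gt1 _ _ mu0 rho0 _ minimizer step.
have [mSv Sv_fin] := state v v_ad.
apply: (scaled_sqL2_mubar_bounded step _ _ _ mOm mpsi _ _ minimizer _ v v_ad
  v_feas).
all: rewrite ?mu0 ?rho0 //.
- exact: ltW.
- by move=> u /state[].
- exact: ltW.
- exact: (fobj_lt_pinfty mOm (ltW alpha_gt0) _ _ _ Om_fin myd yd_fin v_ad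
    mSv Sv_fin).
Qed.
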